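(* Let $n,m$ be integers with $n\geq m\geq 0$. For every integer $k\geq 4$, $$ gr_{k}(K_{3} : S(n,m)) \geq \begin{cases} 5\cdot\frac{n}{2} + m(k-3)+1 & \text{ if $n$ is even,}\\ 5\cdot\frac{n-1}{2} + m(k-3)+ 2 & \text{ if $n$ is odd.} \end{cases} $$
   Context: For integers $n\geq m\geq 0$, the double star $S(n,m)$ is the graph obtained from the disjoint union of the stars $K_{1,n}$ and $K_{1,m}$ by adding an edge between their centers. A $k$-coloring of a graph is an assignment of one of $k$ colors to each edge. A subgraph is rainbow if all its edges have distinct colors and monochromatic if all its edges have the same color. For graphs $G,H$ and a positive integer $k$, the Gallai–Ramsey number $gr_k(G:H)$ is the minimum integer $N$ such that every $k$-coloring of the edges of the complete graph $K_N$ contains either a rainbow copy of $G$ or a monochromatic copy of $H$. *)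

From mathcomp Require Import all_boot.
Set Implicit Arguments. Unset Strict Implicit. Unset Printing Implicit Defensive.

(* A k-coloring of the edges of K_N: a symmetric map c : 'I_N -> 'I_N -> 'I_k;
   the value c x y for x <> y is the color of the edge {x,y}
   (diagonal values are irrelevant). *)
Definition edge_coloring (N k : nat) (c : 'I_N -> 'I_N -> 'I_k) : Prop :=
  forall x y, c x y = c y x.

(* A (simple) graph H is given by a finite vertex type V and a symmetric
   irreflexive adjacency relation E. *)

Definition rainbow_copy (V : finType) (E : rel V) (N k : nat)
  (c : 'I_N -> 'I_N -> 'I_k) : Prop :=
  exists f : V -> 'I_N, injective f /\
    forall u1 v1 u2 v2, E u1 v1 -> E u2 v2 ->
      c (f u1) (f v1) = c (f u2) (f v2) ->
      (u1 = u2 /\ v1 = v2) \/ (u1 = v2 /\ v1 = u2).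

Definition mono_copy (V : finType) (E : rel V) (N k : nat)
  (c : 'I_N -> 'I_N -> 'I_k) : Prop :=
  exists f : V -> 'I_N, injective f /\
    exists i : 'I_k, forall u v, E u v -> c (f u) (f v) = i.

Definition K3_adj : rel 'I_3 := fun x y => x != y.

(* The double star S(n,m) on vertex set 'I_(n+m+2):
   vertex 0 is the center of K_{1,n}, vertex 1 the center of K_{1,m},
   vertices 2..n+1 are the leaves of the first star,
   vertices n+2..n+m+1 the leaves of the second star. *)
Definition dstar_arc (n m : nat) : rel 'I_(n + m + 2) := fun x y =>
  [|| (val x == 0) && (val y == 1),
      (val x == 0) && (2 <= val y < n + 2)
    | (val x == 1) && (n + 2 <= val y)].

Definition dstar_adj (n m : nat) : rel 'I_(n + m + 2) := fun x y =>
  @dstar_arc n m x y || @dstar_arc n m y x.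

(* N has the Gallai-Ramsey property for (G : H) with k colors: every
   k-coloring of K_N contains a rainbow G or a monochromatic H.
   gr_k(G:H) is the least such N. *)
Definition gr_property (VG : finType) (EG : rel VG) (VH : finType) (EH : rel VH)
  (k N : nat) : Prop :=
  forall c : 'I_N -> 'I_N -> 'I_k, edge_coloring c ->
    rainbow_copy EG c \/ mono_copy EH c.

From mathcomp Require Import all_boot zify.
Set Implicit Arguments. Unset Strict Implicit. Unset Printing Implicit Defensive.

(* Blow up the 2-colouring of K_5 whose colour classes are its two 5-cycles:
   four of its vertices become blocks of n/2 (rounded down) vertices, the
   fifth a block of n/2 rounded up, all coloured 2 inside.  Then add k - 3
   blocks of m vertices one after another, each coloured 2 inside and joined
   to everything before it in a fresh colour.  Every triangle repeats a
   colour.  For an edge uv of colour i, either u has at most n neighbours of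
   colour i or v has at most m: colour 2 never leaves a block, a colour
   between two of the five base blocks leads from u into two blocks of total
   size at most n, and the colour of a later block leads into that block.
   So S(n,m), which needs n + 1 and m + 1 such neighbours, never appears
   monochromatically. *)

Lemma no_rainbow_K3 N k (c : 'I_N -> 'I_N -> 'I_k) :
  (forall x y z, c x y = c y z \/ c y z = c x z \/ c x y = c x z) ->
  ~ rainbow_copy K3_adj c.
Proof.
move=> two_equal [f [_ f_rainbow]].
pose o0 : 'I_3 := @Ordinal 3 0 isT.
pose o1 : 'I_3 := @Ordinal 3 1 isT.
pose o2 : 'I_3 := @Ordinal 3 2 isT.
have [e|[e|e]] := two_equal (f o0) (f o1) (f o2).
- by case: (f_rainbow o0 o1 o1 o2 isT isT e) => -[].
- by case: (f_rainbow o1 o2 o0 o2 isT isT e) => -[].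
- by case: (f_rainbow o0 o1 o0 o2 isT isT e) => -[].
Qed.

Definition mono_star N k (c : 'I_N -> 'I_N -> 'I_k) u i (S : seq 'I_N) :=
  uniq (u :: S) /\ {in S, forall w, c u w = i}.

Lemma mono_dstar_stars n m N k (c : 'I_N -> 'I_N -> 'I_k) :
  mono_copy (@dstar_adj n m) c ->
  exists (u v : 'I_N) (S T : seq 'I_N), [/\ mono_star c u (c u v) S,
    mono_star c v (c u v) T, size S = n.+1 & size T = m.+1].
Proof.
case=> f [f_inj [i f_mono]].
have d0 : 'I_(n + m + 2) by exists 0; rewrite addn2.
pose F j := f (insubd d0 j).
have vF j : j < n + m + 2 -> val (insubd d0 j) = j by move=> lt; rewrite val_insubd lt.
have F_inj : {in gtn (n + m + 2) &, injective F}.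
  by move=> j1 j2 lt1 lt2 /f_inj /(congr1 val); rewrite !vF.
have uniq_F s : {subset s <= gtn (n + m + 2)} -> uniq s -> uniq (map F s).
  by move=> sN; rewrite (map_inj_in_uniq (sub_in2 sN F_inj)).
have leaf0 j : 0 < j < n + 2 -> c (F 0) (F j) = i.
  by move=> lt; apply: f_mono; rewrite /dstar_adj /dstar_arc !vF; lia.
have leaf1 j : (j == 0) || (n + 2 <= j < n + m + 2) -> c (F 1) (F j) = i.
  by move=> lt; apply: f_mono; rewrite /dstar_adj /dstar_arc !vF; lia.
exists (F 0), (F 1), (map F (iota 1 n.+1)), (map F (0 :: iota (n + 2) m)).
have -> : c (F 0) (F 1) = i by apply: leaf0; lia.
split; [split|split|by rewrite size_map size_iota|by rewrite size_map /= size_iota].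
- by apply: uniq_F (iota 0 n.+2) _ (iota_uniq _ _) => j; rewrite mem_iota inE; lia.
- by move=> _ /mapP[j + ->]; rewrite mem_iota => lt; apply: leaf0; lia.
- apply: uniq_F [:: 1, 0 & iota (n + 2) m] _ _.
    by move=> j; rewrite !inE mem_iota; lia.
  by rewrite /= !inE !mem_iota iota_uniq; lia.
- by move=> _ /mapP[j + ->]; rewrite inE mem_iota => lt; apply: leaf1; lia.
Qed.

Definition cycle5_adj (a b : nat) : bool := (a.+1 %% 5 == b) || (b.+1 %% 5 == a).

Definition block_color (a b : nat) : nat :=
  if a == b then 2
  else if maxn a b < 5 then (if cycle5_adj a b then 0 else 1)
  else (maxn a b).-2.

Lemma block_colorC a b : block_color a b = block_color b a.
Proof. by rewrite /block_color eq_sym maxnC /cycle5_adj orbC. Qed.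

Lemma block_color_refl a : block_color a a = 2.
Proof. by rewrite /block_color eqxx. Qed.

Lemma block_color_eq2 a b : block_color a b = 2 -> a = b.
Proof. by rewrite /block_color; do ! case: ifP; lia. Qed.

Lemma block_color_tri a b c :
  block_color a b = block_color b c \/ block_color b c = block_color a c \/
  block_color a b = block_color a c.
Proof.
case: (eqVneq a b) => [<-|ab]; first by right; left.
case: (eqVneq b c) => [<-|bc]; first by right; right.
case: (eqVneq a c) => [<-|ac]; first by left; apply: block_colorC.
rewrite /block_color (negPf ab) (negPf bc) (negPf ac); do ? case: ifP; lia.
Qed.

Lemma block_color_high a b c : a < b -> 5 <= b ->
  block_color a c = block_color a b -> c = b.
Proof. by rewrite /block_color; do ! case: ifP; lia. Qed.

Lemma block_color_small a b : a != b -> maxn a b < 5 ->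
  exists2 q, (q != b) && (q < 5) &
    forall c, block_color a c = block_color a b -> c = b \/ c = q.
Proof.
move=> ab; rewrite gtn_max => /andP[a5 b5].
(* the two 5-cycles are symmetric under the reflection x |-> 2a - x about a *)
exists ((a + a + 5 - b) %% 5).
  by move: ab a5 b5; case: a => [|[|[|[|[|a]]]]]; case: b => [|[|[|[|[|b]]]]].
move=> c; case: (ltnP c 5) => c5; last by rewrite /block_color; do ? case: ifP; lia.
move: ab a5 b5 c5; case: a => [|[|[|[|[|a]]]]]; case: b => [|[|[|[|[|b]]]]] //;
  by case: c => [|[|[|[|[|c]]]]]; auto.
Qed.

Definition base_size n := 5 * n./2 + odd n.

Lemma base_sizeE n r :
  (if odd n then 5 * ((n - 1) %/ 2) + r + 2 else 5 * (n %/ 2) + r + 1) =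
  (base_size n + r).+1.
Proof.
have := odd_double_half n; rewrite /base_size -!divn2.
by case: ifP => _; lia.
Qed.

Section Blocks.
Variables n m : nat.

(* Blocks 0..4 blow up the vertices of K_5; block 4 + g is the g-th added
   block.  When m = 0 the last branch is junk, but then no vertex below the
   bound of [block_bounds] reaches it. *)
Definition block (w : nat) : nat :=
  if w < 4 * n./2 then w %/ n./2
  else if w < base_size n then 4
  else 5 + (w - base_size n) %/ m.

Definition block_size (b : nat) : nat :=
  if b < 4 then n./2 else if b == 4 then n./2 + odd n else m.

Definition block_start (b : nat) : nat :=
  if b < 5 then b * n./2 else base_size n + (b - 5) * m.

Definition block_seq (b : nat) : seq nat := iota (block_start b) (block_size b).

Lemma block_bounds K w : w < base_size n + m * K ->
  block w < K + 5 /\ w \in block_seq (block w).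
Proof.
rewrite /block_seq /block /block_start /block_size mem_iota => wB.
case: (ltnP w (4 * n./2)) => [w4|w4].
  have h0 : 0 < n./2 by lia.
  have q4 : w %/ n./2 < 4 by rewrite ltn_divLR // mulnC.
  have q5 : w %/ n./2 < 5 := ltnW q4.
  rewrite q4 q5; split; first lia.
  by have := divn_eq w n./2; have := ltn_pmod w h0; lia.
case: (ltnP w (base_size n)) => [wb|wb]; first by rewrite /= /base_size in wb *; lia.
have m0 : 0 < m by case: m wB => [|//]; rewrite mul0n addn0; lia.
have qK : (w - base_size n) %/ m < K by rewrite ltn_divLR // mulnC; lia.
split; first lia.
have := divn_eq (w - base_size n) m; have := ltn_pmod (w - base_size n) m0.
rewrite addKn; move: qK; set q := _ %/ m; set r := _ %% m; clearbody q r.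
have -> : (5 + q < 5) = false by lia.
have -> : (5 + q < 4) = false by lia.
have -> : (5 + q == 4) = false by lia.
lia.
Qed.

Lemma block_size_le b : m <= n -> block_size b <= n.
Proof. have := odd_double_half n; rewrite /block_size; do ? case: ifP; lia. Qed.

Lemma block_size_high b : 4 < b -> block_size b = m.
Proof. by rewrite /block_size; do ? case: ifP; lia. Qed.

Lemma block_size_pair p q : p != q -> p < 5 -> q < 5 ->
  block_size p + block_size q <= n.
Proof. have := odd_double_half n; rewrite /block_size; do ? case: ifP; lia. Qed.

End Blocks.

Section Blowup.
Variables n m k N : nat.
Hypothesis k_ge4 : 4 <= k.
Hypothesis N_le : N <= base_size n + m * (k - 3).

Lemma block_ord_bounds (x : 'I_N) :
  block n m x < k + 2 /\ val x \in block_seq n m (block n m x).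
Proof.
have [lt mem] := block_bounds (leq_trans (ltn_ord x) N_le).
by split; [lia | exact: mem].
Qed.

Lemma block_color_lt (x y : 'I_N) : block_color (block n m x) (block n m y) < k.
Proof.
have [ltx _] := block_ord_bounds x; have [lty _] := block_ord_bounds y.
by rewrite /block_color; do ? case: ifP; lia.
Qed.

Definition blowup_coloring (x y : 'I_N) : 'I_k := Ordinal (block_color_lt x y).
Local Notation c := blowup_coloring.

Lemma blowup_coloring_sym : edge_coloring c.
Proof. by move=> x y; apply: val_inj; rewrite /= block_colorC. Qed.

Lemma blowup_no_rainbow_K3 : ~ rainbow_copy K3_adj c.
Proof.
apply: no_rainbow_K3 => x y z.
by case: (block_color_tri (block n m x) (block n m y) (block n m z)) => [|[|]] e;
  [left | right; left | right; right]; apply: val_inj.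
Qed.

Lemma size_in_blocks (S : seq 'I_N) (B : seq nat) : uniq S ->
  {in S, forall w : 'I_N, block n m w \in B} ->
  size S <= sumn [seq block_size n m b | b <- B].
Proof.
move=> uS SB.
have sub : {subset map val S <= flatten [seq block_seq n m b | b <- B]}.
  move=> _ /mapP[w wS ->]; apply/flattenP.
  exists (block_seq n m (block n m w)); first exact: map_f (SB w wS).
  by case: (block_ord_bounds w).
have uniq_valS : uniq (map val S) by rewrite (map_inj_uniq val_inj).
have := uniq_leq_size uniq_valS sub.
by rewrite size_map size_flatten /shape -map_comp (eq_map (fun b => size_iota _ _)).
Qed.

Lemma size_in_block (S : seq 'I_N) b : uniq S ->
  {in S, forall w : 'I_N, block n m w = b} -> size S <= block_size n m b.
Proof.
move=> uS Sb; have := size_in_blocks (B := [:: b]) uS; rewrite /= addn0; apply.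
by move=> w /Sb ->; rewrite inE.
Qed.

Lemma blowup_star_bound (u v : 'I_N) S T : m <= n ->
  mono_star c u (c u v) S -> mono_star c v (c u v) T -> size S <= n \/ size T <= m.
Proof.
move=> m_le_n [uS Su] [vT Tv]; have /andP[_ uniqS] := uS; have /andP[_ uniqT] := vT.
set bu := block n m u; set bv := block n m v.
have colS w : w \in S -> block_color bu (block n m w) = block_color bu bv.
  by move/Su/(congr1 val).
have colT w : w \in T -> block_color bv (block n m w) = block_color bv bu.
  by move/Tv/(congr1 val); rewrite /= [in RHS]block_colorC.
case: (eqVneq bu bv) => [buv|buv].
  left; have := block_size_le bu m_le_n.
  suff : size (u :: S) <= block_size n m bu by rewrite /=; lia.
  apply: size_in_block uS _ => w; rewrite inE => /predU1P[-> //|/colS].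
  by rewrite -buv block_color_refl => /block_color_eq2.
case: (ltnP (maxn bu bv) 5) => [small|large].
  have [q /andP[qv q5] refl_q] := block_color_small buv small.
  have bv5 : bv < 5 by lia.
  left; apply: leq_trans (block_size_pair n m qv q5 bv5); rewrite addnC.
  have := size_in_blocks (B := [:: bv; q]) uniqS; rewrite /= addn0; apply.
  by move=> w /colS /refl_q [->|->]; rewrite !inE eqxx ?orbT.
case: (ltngtP bu bv) => [lt|gt|eq]; last by rewrite eq eqxx in buv.
- left; apply: leq_trans m_le_n; rewrite -(block_size_high n m (_ : 4 < bv)); last by lia.
  apply: size_in_block uniqS _ => w /colS; apply: block_color_high => //; lia.
- right; rewrite -(block_size_high n m (_ : 4 < bu)); last by lia.
  apply: size_in_block uniqT _ => w /colT; apply: block_color_high => //; lia.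
Qed.

Lemma blowup_no_mono_dstar : m <= n -> ~ mono_copy (@dstar_adj n m) c.
Proof.
move=> m_le_n /mono_dstar_stars[u [v [S [T [uS vT sS sT]]]]].
by case: (blowup_star_bound m_le_n uS vT); rewrite ?sS ?sT ltnn.
Qed.

End Blowup.

Theorem lemma2 (n m k : nat) : m <= n -> 4 <= k ->
  forall N : nat, gr_property K3_adj (@dstar_adj n m) k N ->
  (if odd n then 5 * ((n - 1) %/ 2) + m * (k - 3) + 2
   else 5 * (n %/ 2) + m * (k - 3) + 1) <= N.
Proof.
move=> m_le_n k_ge4 N gr_N; rewrite base_sizeE ltnNge; apply/negP => N_le.
have [] := gr_N _ (blowup_coloring_sym k_ge4 N_le).
  exact: blowup_no_rainbow_K3.
exact: blowup_no_mono_dstar m_le_n.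
Qed.
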